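(* Let $\mathcal F,\mathcal F_t,\mathcal F_{st}$ be exact categories with twist functors $X\mapsto X(1)$, let $\eta_t\colon\mathcal F\to\mathcal F_t$ and $\eta_{st}\colon\mathcal F\to\mathcal F_{st}$ be exact functors commuting with the twists, and $\sigma\colon\eta_{st}\to\eta_{st}(1)$ a natural transformation commuting with the twists. Assume $\eta_t$ satisfies (ii$'$) and (ii$''$), and (III): a morphism $f\colon X\to Y$ of $\mathcal F$ satisfies $\eta_t(f)=0$ iff $\sigma_Y\circ\eta_{st}(f)=0$. Then for all $X,Y\in\mathcal F$ there are maps $s_0\colon\operatorname{Hom}_{\mathcal F_t}(\eta_tX,\eta_t(Y)(-1))\to\operatorname{Hom}_{\mathcal F_{st}}(\eta_{st}X,\eta_{st}Y)$ such that for every $p$, every admissible epimorphism $q\colon X'\to X$ and every $h\colon X'\to Y(-1)$ in $\mathcal F$ with $\eta_t(h)=p\circ\eta_t(q)$, one has $s_0(p)\circ\eta_{st}(q)=\sigma_{Y(-1)}\circ\eta_{st}(h)$; and these maps satisfy: (a) $s_0(\mathrm{id}_{\eta_t(E)})=\sigma_E\in\operatorname{Hom}_{\mathcal F_{st}}(\eta_{st}E,\eta_{st}(E)(1))$ for every $E\in\mathcal F$; (b) $s_0(\eta_t(g(-1))\,p\,\eta_t(h))=\eta_{st}(g)\,s_0(p)\,\eta_{st}(h)$ for all $h\colon U\to X$, $g\colon Y\to V$ in $\mathcal F$ and $p\colon\eta_tX\to\eta_t(Y)(-1)$; (c) $s_0$ is injective for all $X,Y$; (d) a morphism $g\colon\eta_{st}X\to\eta_{st}Y$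 lies in the image of $s_0$ iff there is an admissible epimorphism $X'\to X$ in $\mathcal F$ with $\eta_{st}(X')\to\eta_{st}(X)\xrightarrow{g}\eta_{st}(Y)$ divisible by $\sigma$, iff there is an admissible monomorphism $Y\to Y'$ in $\mathcal F$ with $\eta_{st}(X)\xrightarrow{g}\eta_{st}(Y)\to\eta_{st}(Y')$ divisible by $\sigma$.
   Context: Exact categories in Quillen's sense; a twist functor is an exact autoequivalence; functors commute with twists via fixed isomorphisms $\eta(X(1))\cong\eta(X)(1)$; $\sigma$ commutes with the twists if $\sigma_{X(1)}=\sigma_X(1)$. A morphism $\eta_{st}(A)\to\eta_{st}(B)$ is divisible by $\sigma$ if it equals $\sigma_{B(-1)}\circ\eta_{st}(h)$ for some $h\colon A\to B(-1)$ in $\mathcal F$. For an exact functor $\eta$: (ii$'$) for any $X,Y$ and any $g\colon\eta X\to\eta Y$ there exist an admissible epimorphism $p\colon X'\to X$ and $h\colon X'\to Y$ with $g\eta(p)=\eta(h)$; (ii$''$) for any $g\colon\eta X\to\eta Y$ there exist an admissible monomorphism $j\colon Y\to Y'$ and $h\colon X\to Y'$ with $\eta(j)g=\eta(h)$. *)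

From HB Require Import structures.
From mathcomp Require Import all_boot all_algebra.
Set Implicit Arguments. Unset Strict Implicit. Unset Printing Implicit Defensive.
Import GRing.Theory.
Local Open Scope ring_scope.

Record PreAddCat := {
  ob :> Type;
  Mor : ob -> ob -> zmodType;
  compo : forall X Y Z : ob, Mor Y Z -> Mor X Y -> Mor X Z;
  idm : forall X : ob, Mor X X;
  compA : forall X Y Z W (f : Mor Z W) (g : Mor Y Z) (h : Mor X Y),
      compo f (compo g h) = compo (compo f g) h;
  comp1m : forall X Y (f : Mor X Y), compo (idm Y) f = f;
  compm1 : forall X Y (f : Mor X Y), compo f (idm X) = f;
  compDl : forall X Y Z (f g : Mor Y Z) (h : Mor X Y),
      compo (f + g) h = compo f h + compo g h;
  compDr : forall X Y Z (f : Mor Y Z) (g h : Mor X Y),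
      compo f (g + h) = compo f g + compo f h
}.
Arguments Mor {p}.
Arguments compo {p X Y Z}.
Arguments idm {p}.

Notation "g \oc f" := (compo g f) (at level 40, left associativity).

Section Basic.
Variable C : PreAddCat.

Definition is_iso (X Y : C) (f : Mor X Y) : Prop :=
  exists g : Mor Y X, g \oc f = idm X /\ f \oc g = idm Y.

(* additivity: a zero object and binary biproducts *)
Definition additive_cat : Prop :=
  (exists Z : C, idm Z = 0) /\
  (forall A B : C, exists (P : C) (i1 : Mor A P) (i2 : Mor B P)
                          (p1 : Mor P A) (p2 : Mor P B),
      [/\ p1 \oc i1 = idm A, p2 \oc i2 = idm B, p1 \oc i2 = 0, p2 \oc i1 = 0
        & i1 \oc p1 + i2 \oc p2 = idm P]).

Definition is_kernel (A B D : C) (i : Mor A B) (p : Mor B D) : Prop :=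
  p \oc i = 0 /\
  forall (W : C) (f : Mor W B), p \oc f = 0 -> exists! g : Mor W A, i \oc g = f.

Definition is_cokernel (A B D : C) (p : Mor B D) (i : Mor A B) : Prop :=
  p \oc i = 0 /\
  forall (W : C) (f : Mor B W), f \oc i = 0 -> exists! g : Mor D W, g \oc p = f.

Definition is_pullback (B D C' B' : C) (p : Mor B D) (f : Mor C' D)
    (p' : Mor B' C') (f' : Mor B' B) : Prop :=
  p \oc f' = f \oc p' /\
  forall (W : C) (a : Mor W B) (b : Mor W C'), p \oc a = f \oc b ->
    exists! k : Mor W B', f' \oc k = a /\ p' \oc k = b.

Definition is_pushout (A B A' B' : C) (i : Mor A B) (f : Mor A A')
    (i' : Mor A' B') (f' : Mor B B') : Prop :=
  f' \oc i = i' \oc f /\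
  forall (W : C) (a : Mor B W) (b : Mor A' W), a \oc i = b \oc f ->
    exists! k : Mor B' W, k \oc f' = a /\ k \oc i' = b.

Definition conflation_class := forall A B D : C, Mor A B -> Mor B D -> Prop.

Variable E : conflation_class.

Definition adm_epi (B D : C) (p : Mor B D) : Prop :=
  exists (A : C) (i : Mor A B), E i p.
Definition adm_mono (A B : C) (i : Mor A B) : Prop :=
  exists (D : C) (p : Mor B D), E i p.

(* Quillen's axioms for an exact structure (as in Buehler, Exact categories) *)
Definition exact_structure : Prop :=
  [/\
      (forall A B D (i : Mor A B) (p : Mor B D), E i p ->
         is_kernel i p /\ is_cokernel p i),
      (forall A B D A' B' D' (i : Mor A B) (p : Mor B D)
              (i' : Mor A' B') (p' : Mor B' D')
              (a : Mor A' A) (b : Mor B' B) (d : Mor D' D),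
         E i p -> is_iso a -> is_iso b -> is_iso d ->
         i \oc a = b \oc i' -> p \oc b = d \oc p' -> E i' p'),
      (forall X : C, adm_mono (idm X) /\ adm_epi (idm X)),
      (forall X Y Z (f : Mor X Y) (g : Mor Y Z),
         (adm_mono f -> adm_mono g -> adm_mono (g \oc f)) /\
         (adm_epi f -> adm_epi g -> adm_epi (g \oc f))) &
      (forall A B A' (i : Mor A B) (f : Mor A A'), adm_mono i ->
         exists (B' : C) (i' : Mor A' B') (f' : Mor B B'),
           is_pushout i f i' f' /\ adm_mono i') /\
      (forall B D C' (p : Mor B D) (f : Mor C' D), adm_epi p ->
         exists (B' : C) (p' : Mor B' C') (f' : Mor B' B),
           is_pullback p f p' f' /\ adm_epi p') ].

End Basic.

Record ExactCat := {
  ecat :> PreAddCat;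
  conf : conflation_class ecat;
  ecat_additive : additive_cat ecat;
  ecat_exact : exact_structure conf
}.

Definition admEpi (C : ExactCat) (B D : C) (p : Mor B D) := adm_epi (@conf C) p.
Definition admMono (C : ExactCat) (A B : C) (i : Mor A B) := adm_mono (@conf C) i.

Record AddFunctor (C D : PreAddCat) := {
  fob :> C -> D;
  fmap : forall X Y : C, Mor X Y -> Mor (fob X) (fob Y);
  fmapD : forall X Y (f g : Mor X Y), fmap (f + g) = fmap f + fmap g;
  fmap_comp : forall X Y Z (g : Mor Y Z) (f : Mor X Y),
      fmap (g \oc f) = fmap g \oc fmap f;
  fmap_id : forall X, fmap (idm X) = idm (fob X)
}.
Arguments fmap {C D} _ {X Y}.

Definition exact_functor (C D : ExactCat) (F : AddFunctor C D) : Prop :=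
  forall (A B E : C) (i : Mor A B) (p : Mor B E),
    conf i p -> conf (fmap F i) (fmap F p).

(* ---------- Twist functors: exact autoequivalences ----------
   tw X = X(1), utw X = X(-1); unit : X ~= X(1)(-1), counit : X(-1)(1) ~= X,
   fixed natural isomorphisms forming an adjoint equivalence. *)
Record Twist (C : ExactCat) := {
  tw : AddFunctor C C;
  utw : AddFunctor C C;
  tw_exact : exact_functor tw;
  utw_exact : exact_functor utw;
  tunit : forall X : C, Mor X (utw (tw X));
  tunit_inv : forall X : C, Mor (utw (tw X)) X;
  tunitK : forall X, tunit_inv X \oc tunit X = idm X;
  tunitKV : forall X, tunit X \oc tunit_inv X = idm (utw (tw X));
  tunit_nat : forall X Y (f : Mor X Y),
      tunit Y \oc f = fmap utw (fmap tw f) \oc tunit X;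
  tcounit : forall X : C, Mor (tw (utw X)) X;
  tcounit_inv : forall X : C, Mor X (tw (utw X));
  tcounitK : forall X, tcounit_inv X \oc tcounit X = idm (tw (utw X));
  tcounitKV : forall X, tcounit X \oc tcounit_inv X = idm X;
  tcounit_nat : forall X Y (f : Mor X Y),
      tcounit Y \oc fmap tw (fmap utw f) = f \oc tcounit X;
  ttriangle : forall X, tcounit (tw X) \oc fmap tw (tunit X) = idm (tw X)
}.
Arguments tw {C}.
Arguments utw {C}.
Arguments tunit {C}.
Arguments tcounit {C}.

Record TwFunctor (C D : ExactCat) (TC : Twist C) (TD : Twist D) := {
  tfun :> AddFunctor C D;
  tfun_exact : exact_functor tfun;
  cm : forall X : C, Mor (tfun (tw TC X)) (tw TD (tfun X));
  cm_inv : forall X : C, Mor (tw TD (tfun X)) (tfun (tw TC X));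
  cmK : forall X, cm_inv X \oc cm X = idm _;
  cmKV : forall X, cm X \oc cm_inv X = idm _;
  cm_nat : forall X Y (f : Mor X Y),
      cm Y \oc fmap tfun (fmap (tw TC) f) = fmap (tw TD) (fmap tfun f) \oc cm X
}.
Arguments cm {C D TC TD}.
Arguments cm_inv {C D TC TD}.

Record TwNat (C D : ExactCat) (TC : Twist C) (TD : Twist D)
    (F : TwFunctor TC TD) := {
  sigm_at : forall X : C, Mor (F X) (tw TD (F X));
  sig_nat : forall X Y (f : Mor X Y),
      sigm_at Y \oc fmap F f = fmap (tw TD) (fmap F f) \oc sigm_at X;
  (* sigma_{X(1)} = sigma_X(1), transported along cm *)
  sig_tw : forall X : C,
      fmap (tw TD) (cm F X) \oc sigm_at (tw TC X) = fmap (tw TD) (sigm_at X) \oc cm F X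
}.
Arguments sigm_at {C D TC TD F}.

Section Derived.
Variables (C D : ExactCat) (TC : Twist C) (TD : Twist D) (F : TwFunctor TC TD).

(* sigma_{Y(-1)} viewed as a map F(Y(-1)) -> F(Y(-1))(1) ~= F(Y(-1)(1)) ~= F(Y) *)
Definition sigm (s : TwNat F) (Y : C) : Mor (F (utw TC Y)) (F Y) :=
  fmap F (tcounit TC Y) \oc cm_inv F (utw TC Y) \oc sigm_at s (utw TC Y).

(* canonical iso F(Y(-1)) ~= F(Y)(-1) *)
Definition iotw (Y : C) : Mor (F (utw TC Y)) (utw TD (F Y)) :=
  fmap (utw TD) (fmap F (tcounit TC Y) \oc cm_inv F (utw TC Y))
  \oc tunit TD (F (utw TC Y)).

(* canonical iso F(E) ~= F(E(1))(-1), the image of id_{F E} *)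
Definition idtw (E : C) : Mor (F E) (utw TD (F (tw TC E))) :=
  fmap (utw TD) (cm_inv F E) \oc tunit TD (F E).

Definition divisible (s : TwNat F) (A B : C) (k : Mor (F A) (F B)) : Prop :=
  exists h : Mor A (utw TC B), k = sigm s B \oc fmap F h.

Definition cond_ii' : Prop :=
  forall (X Y : C) (g : Mor (F X) (F Y)),
    exists (X' : C) (p : Mor X' X) (h : Mor X' Y),
      admEpi p /\ g \oc fmap F p = fmap F h.
Definition cond_ii'' : Prop :=
  forall (X Y : C) (g : Mor (F X) (F Y)),
    exists (Y' : C) (j : Mor Y Y') (h : Mor X Y'),
      admMono j /\ fmap F j \oc g = fmap F h.
End Derived.

(* Condition (ii') writes every p : et X -> (et Y)(-1) as et(h) et(q)^-1 with q an
   admissible epimorphism, and s0(p) is the morphism with s0(p) est(q) = sigma est(h).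
   By (III), sigma est(h) only depends on et(h); comparing two such representations
   over a pullback shows that this does not depend on the choice of (q, h), and the
   morphism exists because est(q) is the cokernel of est of its kernel.  The same
   comparison gives injectivity, and (ii'') together with kernels gives the
   description of the image through admissible monomorphisms. *)

From mathcomp Require Import all_boot all_algebra.
From Stdlib Require Import ClassicalEpsilon.
Set Implicit Arguments. Unset Strict Implicit. Unset Printing Implicit Defensive.
Import GRing.Theory.
Local Open Scope ring_scope.

Section PreAdditive.
Variable C : PreAddCat.

Lemma comp0m (X Y Z : C) (f : Mor X Y) : (0 : Mor Y Z) \oc f = 0.
Proof.
apply: (addrI ((0 : Mor Y Z) \oc f)).
by rewrite -compDl !addr0.
Qed.

Lemma compm0 (X Y Z : C) (g : Mor Y Z) : g \oc (0 : Mor X Y) = 0.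
Proof.
apply: (addrI (g \oc (0 : Mor X Y))).
by rewrite -compDr !addr0.
Qed.

Lemma compNl (X Y Z : C) (g : Mor Y Z) (f : Mor X Y) : (- g) \oc f = - (g \oc f).
Proof. by apply/eqP; rewrite -subr_eq0 opprK -compDl addNr comp0m. Qed.

Lemma compNr (X Y Z : C) (g : Mor Y Z) (f : Mor X Y) : g \oc (- f) = - (g \oc f).
Proof. by apply/eqP; rewrite -subr_eq0 opprK -compDr addNr compm0. Qed.

Lemma compBl (X Y Z : C) (g1 g2 : Mor Y Z) (f : Mor X Y) :
  (g1 - g2) \oc f = g1 \oc f - g2 \oc f.
Proof. by rewrite compDl compNl. Qed.

Lemma compBr (X Y Z : C) (g : Mor Y Z) (f1 f2 : Mor X Y) :
  g \oc (f1 - f2) = g \oc f1 - g \oc f2.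
Proof. by rewrite compDr compNr. Qed.

End PreAdditive.

Section AdditiveFunctor.
Variables (C D : PreAddCat) (F : AddFunctor C D).

Lemma fmap0 (X Y : C) : fmap F (0 : Mor X Y) = 0.
Proof.
apply: (addrI (fmap F (0 : Mor X Y))).
by rewrite -fmapD !addr0.
Qed.

Lemma fmapB (X Y : C) (f g : Mor X Y) : fmap F (f - g) = fmap F f - fmap F g.
Proof. by apply/eqP; rewrite eq_sym subr_eq -fmapD subrK. Qed.

End AdditiveFunctor.

Section ExactCategory.
Variable C : ExactCat.
Implicit Types A B D : C.

Lemma conf_kernel_cokernel A B D (i : Mor A B) (p : Mor B D) :
  conf i p -> is_kernel i p /\ is_cokernel p i.
Proof. by case: (ecat_exact C) => H _ _ _ _; apply: H. Qed.

Lemma conf_comp0 A B D (i : Mor A B) (p : Mor B D) : conf i p -> p \oc i = 0.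
Proof. by case/conf_kernel_cokernel => [[]]. Qed.

Lemma conf_coker_factor A B D (i : Mor A B) (p : Mor B D) W (f : Mor B W) :
  conf i p -> f \oc i = 0 -> exists g, g \oc p = f.
Proof. by move=> /conf_kernel_cokernel [_ [_ H]] /H [g [Hg _]]; exists g. Qed.

Lemma conf_ker_factor A B D (i : Mor A B) (p : Mor B D) W (f : Mor W B) :
  conf i p -> p \oc f = 0 -> exists g, i \oc g = f.
Proof. by move=> /conf_kernel_cokernel [[_ H] _] /H [g [Hg _]]; exists g. Qed.

Lemma admEpi_cancel B D (p : Mor B D) W (f g : Mor D W) :
  admEpi p -> f \oc p = g \oc p -> f = g.
Proof.
move=> [A [i /conf_kernel_cokernel [_ [_ Hcok]]]] e.
have [k [_ Uk]] := Hcok W 0 (comp0m _ _).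
apply/eqP; rewrite -subr_eq0; apply/eqP.
by rewrite -[f - g]Uk ?(Uk 0) ?comp0m // compBl e subrr.
Qed.

Lemma admMono_cancel A B (i : Mor A B) W (f g : Mor W A) :
  admMono i -> i \oc f = i \oc g -> f = g.
Proof.
move=> [D [p /conf_kernel_cokernel [[_ Hker] _]]] e.
have [k [_ Uk]] := Hker W 0 (compm0 _ _).
apply/eqP; rewrite -subr_eq0; apply/eqP.
by rewrite -[f - g]Uk ?(Uk 0) ?compm0 // compBr e subrr.
Qed.

Lemma admEpi_id A : admEpi (idm A).
Proof. by case: (ecat_exact C) => _ _ H _ _; case: (H A). Qed.

Lemma admEpi_comp A B D (f : Mor A B) (g : Mor B D) :
  admEpi f -> admEpi g -> admEpi (g \oc f).
Proof. by case: (ecat_exact C) => _ _ _ H _; case: (H _ _ _ f g). Qed.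

Lemma admMono_comp A B D (f : Mor A B) (g : Mor B D) :
  admMono f -> admMono g -> admMono (g \oc f).
Proof. by case: (ecat_exact C) => _ _ _ H _; case: (H _ _ _ f g). Qed.

Lemma iso_admMono A B (a : Mor A B) : is_iso a -> admMono a.
Proof.
move=> iso_a; case: (ecat_exact C) => _ Hiso Hid _ _.
case: (Hid B) => [[D [p Hp]] _]; exists D, p.
apply: (Hiso _ _ _ _ _ _ (idm B) p a p a (idm B) (idm D) Hp iso_a).
- by exists (idm B); rewrite comp1m.
- by exists (idm D); rewrite comp1m.
- by rewrite comp1m.
- by rewrite compm1 comp1m.
Qed.

Lemma admEpi_pullback B D C' (p : Mor B D) (f : Mor C' D) : admEpi p ->
  exists (B' : C) (p' : Mor B' C') (f' : Mor B' B),
    p \oc f' = f \oc p' /\ admEpi p'.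
Proof.
case: (ecat_exact C) => _ _ _ _ [_ H] /(H _ _ _ p f) [B' [p' [f' [[e _] ?]]]].
by exists B', p', f'.
Qed.

End ExactCategory.

Section ExactFunctor.
Variables (C D : ExactCat) (F : AddFunctor C D).
Hypothesis exF : exact_functor F.

Lemma exact_admEpi (B E : C) (p : Mor B E) : admEpi p -> admEpi (fmap F p).
Proof. by case=> A [i Hc]; exists (F A), (fmap F i); apply: exF. Qed.

Lemma exact_admMono (A B : C) (i : Mor A B) : admMono i -> admMono (fmap F i).
Proof. by case=> E [p Hc]; exists (F E), (fmap F p); apply: exF. Qed.

End ExactFunctor.

Section TwistTheory.
Variables (C : ExactCat) (T : Twist C).
Local Notation Tw := (tw T).
Local Notation Utw := (utw T).

(* [th] is an idempotent with a left inverse, hence the identity. *)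
Lemma utw_triangle (Y : C) :
  fmap Utw (tcounit T Y) \oc tunit T (Utw Y) = idm (Utw Y).
Proof.
set th := fmap Utw (tcounit T Y) \oc tunit T (Utw Y).
have th_linv : (tunit_inv T (Utw Y) \oc fmap Utw (tcounit_inv T Y)) \oc th = idm _.
  rewrite /th compA -[_ \oc fmap Utw (tcounit_inv T Y) \oc _]compA -(fmap_comp _).
  by rewrite tcounitK fmap_id compm1 tunitK.
have th_idem : th \oc th = th.
  have counit_sq : fmap Utw (tcounit T Y) \oc fmap Utw (fmap Tw (fmap Utw (tcounit T Y)))
           = fmap Utw (tcounit T Y) \oc fmap Utw (tcounit T (Tw (Utw Y))).
    by rewrite -!(fmap_comp _) tcounit_nat.
  rewrite /th -!compA [tunit T (Utw Y) \oc (_ \oc _)]compA tunit_nat -compA.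
  rewrite tunit_nat !compA counit_sq -[X in X \oc tunit T (Utw Y)]compA -(fmap_comp _).
  by rewrite ttriangle fmap_id compm1.
by rewrite -th_linv -th_idem compA th_linv comp1m.
Qed.

Lemma tunit_utw (Y : C) : tunit T (Utw Y) = fmap Utw (tcounit_inv T Y).
Proof.
rewrite -[tunit T (Utw Y)]comp1m -(fmap_id Utw) -tcounitK fmap_comp -compA.
by rewrite utw_triangle compm1.
Qed.

End TwistTheory.

Section TwistedFunctor.
Variables (C D : ExactCat) (TC : Twist C) (TD : Twist D) (F : TwFunctor TC TD).

Lemma cm_inv_nat (X Y : C) (f : Mor X Y) :
  cm_inv F Y \oc fmap (tw TD) (fmap F f) = fmap F (fmap (tw TC) f) \oc cm_inv F X.
Proof.
rewrite -[LHS]compm1 -(cmKV F X) compA -[cm_inv F Y \oc _ \oc _]compA -cm_nat.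
by rewrite compA cmK comp1m.
Qed.

Definition iotw_inv (Y : C) : Mor (utw TD (F Y)) (F (utw TC Y)) :=
  tunit_inv TD (F (utw TC Y))
  \oc fmap (utw TD) (cm F (utw TC Y) \oc fmap F (tcounit_inv TC Y)).

Lemma iotwK (Y : C) : iotw_inv Y \oc iotw F Y = idm _.
Proof.
have tcounit_cmK : (cm F (utw TC Y) \oc fmap F (tcounit_inv TC Y))
          \oc (fmap F (tcounit TC Y) \oc cm_inv F (utw TC Y)) = idm _.
  rewrite compA -[_ \oc fmap F _ \oc fmap F _]compA -(fmap_comp _) tcounitK.
  by rewrite fmap_id compm1 cmKV.
rewrite /iotw_inv /iotw -compA [fmap _ _ \oc (_ \oc _)]compA -(fmap_comp _) tcounit_cmK.
by rewrite fmap_id comp1m tunitK.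
Qed.

Lemma iotw_invK (Y : C) : iotw F Y \oc iotw_inv Y = idm _.
Proof.
have tcounit_cmKV : (fmap F (tcounit TC Y) \oc cm_inv F (utw TC Y))
          \oc (cm F (utw TC Y) \oc fmap F (tcounit_inv TC Y)) = idm _.
  rewrite compA -[_ \oc cm_inv F _ \oc cm F _]compA cmK compm1 -(fmap_comp _).
  by rewrite tcounitKV fmap_id.
rewrite /iotw_inv /iotw compA -[_ \oc tunit TD _ \oc _]compA tunitKV compm1.
by rewrite -(fmap_comp _) tcounit_cmKV fmap_id.
Qed.

Lemma iotw_inj (X : D) (Y : C) (a b : Mor X (F (utw TC Y))) :
  iotw F Y \oc a = iotw F Y \oc b -> a = b.
Proof.
by move=> e; rewrite -[a]comp1m -[b]comp1m -(iotwK Y) -(compA _ _ a) -(compA _ _ b) e.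
Qed.

Lemma iotw_nat (Y V : C) (g : Mor Y V) :
  iotw F V \oc fmap F (fmap (utw TC) g) = fmap (utw TD) (fmap F g) \oc iotw F Y.
Proof.
rewrite /iotw -compA tunit_nat compA -(fmap_comp _) -compA cm_inv_nat compA.
rewrite -(fmap_comp _) tcounit_nat (fmap_comp F g) -(compA (fmap F g)).
by rewrite (fmap_comp (utw TD)) compA.
Qed.

Lemma iotw_tunit (E : C) : iotw F (tw TC E) \oc fmap F (tunit TC E) = idtw F E.
Proof.
rewrite /iotw /idtw -compA tunit_nat compA -(fmap_comp _) -compA cm_inv_nat compA.
by rewrite -(fmap_comp _) ttriangle fmap_id comp1m.
Qed.

Variable s : TwNat F.

Lemma sigm_nat (Y V : C) (g : Mor Y V) :
  sigm s V \oc fmap F (fmap (utw TC) g) = fmap F g \oc sigm s Y.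
Proof.
rewrite /sigm -compA sig_nat compA -[_ \oc cm_inv F _ \oc _]compA cm_inv_nat.
by rewrite compA -(fmap_comp _) tcounit_nat fmap_comp -!compA.
Qed.

Lemma sigm_cancel (X : D) (Y : C) (a b : Mor X (F (utw TC Y))) :
  sigm s Y \oc a = sigm s Y \oc b ->
  sigm_at s (utw TC Y) \oc a = sigm_at s (utw TC Y) \oc b.
Proof.
have L : cm F (utw TC Y) \oc fmap F (tcounit_inv TC Y) \oc
         fmap F (tcounit TC Y) \oc cm_inv F (utw TC Y) = idm _.
  by rewrite -[cm F _ \oc _ \oc _]compA -(fmap_comp _) tcounitK fmap_id compm1 cmKV.
move/(congr1 (compo (cm F (utw TC Y) \oc fmap F (tcounit_inv TC Y)))).
by rewrite /sigm !compA L !comp1m.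
Qed.

Lemma cm_sigm_tunit (E : C) :
  cm F E \oc (sigm s (tw TC E) \oc fmap F (tunit TC E)) = sigm_at s E.
Proof.
rewrite /sigm -compA sig_nat !compA -[cm F E \oc _ \oc cm_inv F _ \oc _]compA.
rewrite cm_inv_nat compA -[cm F E \oc _ \oc fmap F (fmap _ _)]compA -(fmap_comp _).
by rewrite ttriangle fmap_id compm1 cmKV comp1m.
Qed.

End TwistedFunctor.

Section SigmaLift.
Variables (F Ft Fst : ExactCat) (T : Twist F) (Tt : Twist Ft) (Tst : Twist Fst).
Variables (et : TwFunctor T Tt) (est : TwFunctor T Tst) (s : TwNat est).
Hypothesis ii' : cond_ii' et.
Hypothesis ii'' : cond_ii'' et.
Hypothesis III : forall (X Y : F) (f : Mor X Y),
  fmap et f = 0 <-> sigm_at s Y \oc fmap est f = 0.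

Lemma eq_fmap_et_sigm (X Y : F) (f1 f2 : Mor X (utw T Y)) :
  fmap et f1 = fmap et f2 <-> sigm s Y \oc fmap est f1 = sigm s Y \oc fmap est f2.
Proof.
split=> e.
  have /III sig0 : fmap et (f1 - f2) = 0 by rewrite fmapB e subrr.
  apply/eqP; rewrite -subr_eq0 -compBr -fmapB; apply/eqP.
  by rewrite /sigm -compA sig0 !compm0.
have : sigm s Y \oc fmap est (f1 - f2) = sigm s Y \oc 0.
  by rewrite fmapB compBr e subrr compm0.
move/sigm_cancel; rewrite compm0 => /III.
by rewrite fmapB => /eqP; rewrite subr_eq0 => /eqP.
Qed.

Lemma et_lift (X Y : F) (p : Mor (et X) (utw Tt (et Y))) :
  exists (X' : F) (q : Mor X' X) (h : Mor X' (utw T Y)),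
    admEpi q /\ iotw et Y \oc fmap et h = p \oc fmap et q.
Proof.
have [X' [q [h [q_epi e]]]] := ii' (iotw_inv et Y \oc p).
exists X', q, h; split=> //.
by rewrite -e (compA (iotw et Y)) (compA (iotw et Y)) iotw_invK comp1m.
Qed.

Lemma s0_exists (X Y : F) (p : Mor (et X) (utw Tt (et Y))) :
  exists g : Mor (est X) (est Y),
    forall (X' : F) (q : Mor X' X) (h : Mor X' (utw T Y)),
      admEpi q -> iotw et Y \oc fmap et h = p \oc fmap et q ->
      g \oc fmap est q = sigm s Y \oc fmap est h.
Proof.
have [X1 [q1 [h1 [q1_epi e1]]]] := et_lift p.
have [K [i q1_conf]] := q1_epi.
have h1i0 : (sigm s Y \oc fmap est h1) \oc fmap est i = 0.
  have : fmap et (h1 \oc i) = fmap et 0.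
    apply: iotw_inj; rewrite (fmap_comp et h1 i) compA e1 -compA.
    by rewrite -(fmap_comp _) (conf_comp0 q1_conf) !fmap0 !compm0.
  by move/eq_fmap_et_sigm; rewrite fmap0 compm0 fmap_comp compA.
have [g g_q1] := conf_coker_factor (tfun_exact est q1_conf) h1i0.
exists g => X' q h q_epi e.
have [B' [p' [f' [sq p'_epi]]]] := admEpi_pullback q q1_epi.
apply: (admEpi_cancel (exact_admEpi (tfun_exact est) p'_epi)).
rewrite -compA -(fmap_comp _) -sq fmap_comp compA g_q1 -!(compA (sigm s Y)) -!(fmap_comp _).
apply/eq_fmap_et_sigm/iotw_inj.
by rewrite !fmap_comp !compA e e1 -!compA -!(fmap_comp _) sq.
Qed.

Definition s0 (X Y : F) (p : Mor (et X) (utw Tt (et Y))) : Mor (est X) (est Y) :=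
  proj1_sig (constructive_indefinite_description _ (s0_exists p)).

Lemma s0P (X Y : F) (p : Mor (et X) (utw Tt (et Y)))
    (X' : F) (q : Mor X' X) (h : Mor X' (utw T Y)) :
  admEpi q -> iotw et Y \oc fmap et h = p \oc fmap et q ->
  s0 p \oc fmap est q = sigm s Y \oc fmap est h.
Proof. exact: (proj2_sig (constructive_indefinite_description _ (s0_exists p))). Qed.

Lemma s0E (X Y : F) (p : Mor (et X) (utw Tt (et Y))) (h : Mor X (utw T Y)) :
  iotw et Y \oc fmap et h = p -> s0 p = sigm s Y \oc fmap est h.
Proof.
move=> e; have e' : iotw et Y \oc fmap et h = p \oc fmap et (idm X).
  by rewrite fmap_id compm1.
by rewrite -[s0 p]compm1 -(fmap_id est) (s0P (admEpi_id X) e').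
Qed.

Lemma s0_idtw (E : F) : cm est E \oc s0 (idtw et E) = sigm_at s E.
Proof. by rewrite (s0E (iotw_tunit et E)) cm_sigm_tunit. Qed.

Lemma s0_comp (U X Y V : F) (h : Mor U X) (g : Mor Y V)
    (p : Mor (et X) (utw Tt (et Y))) :
  s0 (fmap (utw Tt) (fmap et g) \oc p \oc fmap et h)
  = fmap est g \oc s0 p \oc fmap est h.
Proof.
have [X' [q [h1 [q_epi e1]]]] := et_lift p.
have [U' [q' [h' [sq q'_epi]]]] := admEpi_pullback h q_epi.
apply: (admEpi_cancel (exact_admEpi (tfun_exact est) q'_epi)).
rewrite (s0P (h := fmap (utw T) g \oc h1 \oc h') q'_epi).
  rewrite -(compA (fmap est g \oc s0 p)) -(fmap_comp _ h) -sq (fmap_comp _ q) compA.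
  rewrite -(compA (fmap est g)) (s0P q_epi e1) !fmap_comp 2!(compA (sigm s V)).
  by rewrite sigm_nat (compA (fmap est g)).
rewrite !fmap_comp !(compA (iotw et V)) iotw_nat -(compA _ (iotw et Y)) e1.
by rewrite -!compA -!(fmap_comp _) sq.
Qed.

Lemma s0_compl (X Y V : F) (g : Mor Y V) (p : Mor (et X) (utw Tt (et Y))) :
  s0 (fmap (utw Tt) (fmap et g) \oc p) = fmap est g \oc s0 p.
Proof. by have := s0_comp (idm X) g p; rewrite !fmap_id !compm1. Qed.

Lemma s0_inj (X Y : F) : injective (@s0 X Y).
Proof.
move=> p1 p2 e.
have [X1 [q1 [h1 [q1_epi e1]]]] := et_lift p1.
have [X2 [q2 [h2 [q2_epi e2]]]] := et_lift (p2 \oc fmap et q1).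
have q_epi := admEpi_comp q2_epi q1_epi.
have a1 : iotw et Y \oc fmap et (h1 \oc q2) = p1 \oc fmap et (q1 \oc q2).
  by rewrite !fmap_comp compA e1 compA.
have a2 : iotw et Y \oc fmap et h2 = p2 \oc fmap et (q1 \oc q2).
  by rewrite e2 fmap_comp compA.
have := s0P q_epi a1; rewrite e (s0P q_epi a2) => /eq_fmap_et_sigm e3.
apply: (admEpi_cancel (exact_admEpi (tfun_exact et) q_epi)).
by rewrite -a1 -a2 e3.
Qed.

Lemma s0_image_epi (X Y : F) (g : Mor (est X) (est Y)) :
  (exists p, s0 p = g) <->
  exists (X' : F) (q : Mor X' X), admEpi q /\ divisible s (g \oc fmap est q).
Proof.
split.
  case=> p <-; have [X' [q [h [q_epi e]]]] := et_lift p.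
  by exists X', q; split=> //; exists h; apply: s0P.
case=> X' [q [q_epi [h e]]]; have [K [i q_conf]] := q_epi.
have hi0 : fmap et h \oc fmap et i = 0.
  rewrite -(fmap_comp _) -(fmap0 et); apply/eq_fmap_et_sigm.
  rewrite fmap0 compm0 fmap_comp compA -e -compA -(fmap_comp _).
  by rewrite (conf_comp0 q_conf) fmap0 compm0.
have iotw_hi0 : (iotw et Y \oc fmap et h) \oc fmap et i = 0.
  by rewrite -compA hi0 compm0.
have [p e_p] := conf_coker_factor (tfun_exact et q_conf) iotw_hi0.
exists p; apply: (admEpi_cancel (exact_admEpi (tfun_exact est) q_epi)).
by rewrite e; apply: s0P; rewrite ?e_p.
Qed.

Lemma s0_image_mono (X Y : F) (g : Mor (est X) (est Y)) :
  (exists p, s0 p = g) <->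
  exists (Y' : F) (j : Mor Y Y'), admMono j /\ divisible s (fmap est j \oc g).
Proof.
split.
  case=> p <-.
  have [Z [j0 [h0 [j0_mono e0]]]] := ii'' (iotw_inv et Y \oc p).
  pose j := fmap (tw T) j0 \oc tcounit_inv T Y.
  exists (tw T Z), j; split.
    apply: admMono_comp (exact_admMono (tw_exact T) j0_mono).
    by apply: iso_admMono; exists (tcounit T Y); rewrite tcounitKV tcounitK.
  exists (tunit T Z \oc h0); rewrite -s0_compl; apply: s0E.
  have utw_j : fmap (utw T) j = tunit T Z \oc j0.
    by rewrite fmap_comp -tunit_utw tunit_nat.
  rewrite fmap_comp -e0 (compA (fmap et (tunit T Z))) -(fmap_comp _) -utw_j.
  rewrite (compA (iotw et (tw T Z))) iotw_nat -(compA (fmap (utw Tt) (fmap et j))).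
  by rewrite (compA (iotw et Y)) iotw_invK comp1m.
case=> Y' [j [j_mono [h e]]]; have [Z [c j_conf]] := j_mono.
have cj0 : fmap et (fmap (utw T) c) \oc fmap et h = 0.
  rewrite -(fmap_comp _) -(fmap0 et); apply/eq_fmap_et_sigm.
  rewrite fmap0 compm0 fmap_comp compA sigm_nat -compA -e compA -(fmap_comp _).
  by rewrite (conf_comp0 j_conf) fmap0 comp0m.
have utw_conf := tfun_exact et (utw_exact T j_conf).
have [k e_k] := conf_ker_factor utw_conf cj0.
exists (iotw et Y \oc k).
apply: (admMono_cancel (exact_admMono (tfun_exact est) j_mono)).
rewrite e -s0_compl; apply: s0E.
by rewrite compA -iotw_nat -compA e_k.
Qed.

End SigmaLift.

Theorem lemma1p3 (F Ft Fst : ExactCat)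
  (T : Twist F) (Tt : Twist Ft) (Tst : Twist Fst)
  (et : TwFunctor T Tt) (est : TwFunctor T Tst) (s : TwNat est)
  (Hii' : cond_ii' et) (Hii'' : cond_ii'' et)
  (HIII : forall (X Y : F) (f : Mor X Y),
      fmap et f = 0 <-> sigm_at s Y \oc fmap est f = 0) :
  exists s0 : forall X Y : F,
      Mor (et X) (utw Tt (et Y)) -> Mor (est X) (est Y),
    (* defining property of s0 *)
    (forall (X Y : F) (p : Mor (et X) (utw Tt (et Y)))
            (X' : F) (q : Mor X' X) (h : Mor X' (utw T Y)),
        admEpi q -> iotw et Y \oc fmap et h = p \oc fmap et q ->
        s0 X Y p \oc fmap est q = sigm s Y \oc fmap est h) /\
    (* (a) *)
    (forall E : F, cm est E \oc s0 E (tw T E) (idtw et E) = sigm_at s E) /\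
    (* (b) *)
    (forall (U X Y V : F) (h : Mor U X) (g : Mor Y V)
            (p : Mor (et X) (utw Tt (et Y))),
        s0 U V (fmap (utw Tt) (fmap et g) \oc p \oc fmap et h)
        = fmap est g \oc s0 X Y p \oc fmap est h) /\
    (* (c) *)
    (forall X Y : F, injective (s0 X Y)) /\
    (* (d) *)
    (forall (X Y : F) (g : Mor (est X) (est Y)),
        ((exists p, s0 X Y p = g) <->
         (exists (X' : F) (q : Mor X' X), admEpi q /\
            divisible s (g \oc fmap est q))) /\
        ((exists p, s0 X Y p = g) <->
         (exists (Y' : F) (j : Mor Y Y'), admMono j /\
            divisible s (fmap est j \oc g)))).
Proof.
exists (fun X Y p => s0 Hii' HIII p).
split; first by move=> *; apply: s0P.
split; first exact: s0_idtw.
split; first exact: s0_comp.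
split; first exact: s0_inj.
by move=> X Y g; split; [apply: s0_image_epi | apply: s0_image_mono].
Qed.
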